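(* Let $\mathcal{A}$ be a separating union-closed family with base set $[n]$ and height $h\le 3$. Then $\mathrm{Avg}(\mathcal{A})=\frac{1}{|\mathcal{A}|}\sum_{A\in\mathcal{A}}|A| \geq \frac{n}{2}$.
   Context: A family of sets $\mathcal{A}$ is union-closed if it is a finite family of distinct finite sets with at least one nonempty member set, and $X,Y\in\mathcal{A}$ implies $X\cup Y\in\mathcal{A}$ (the empty set may be a member). The base set $\bigcup_{A\in\mathcal{A}}A$ is denoted $[n]=\{1,\dots,n\}$. $\mathcal{A}$ is separating if for any two distinct $x,y\in[n]$ there is $A\in\mathcal{A}$ containing exactly one of $x,y$. A chain in $\mathcal{A}$ is a subfamily any two distinct members of which are comparable under proper inclusion; the height $h$ of $\mathcal{A}$ is the maximum size of a chain in $\mathcal{A}$. *)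

From mathcomp Require Import all_boot all_order all_algebra.
Set Implicit Arguments. Unset Strict Implicit. Unset Printing Implicit Defensive.
Import Order.TTheory GRing.Theory Num.Theory.

Definition union_closed (n : nat) (F : {set {set 'I_n}}) : Prop :=
  (exists2 A, A \in F & A != set0) /\
  (forall X Y, X \in F -> Y \in F -> X :|: Y \in F).

Definition has_base_set (n : nat) (F : {set {set 'I_n}}) : Prop :=
  \bigcup_(A in F) A = [set: 'I_n].

Definition separating (n : nat) (F : {set {set 'I_n}}) : Prop :=
  forall x y : 'I_n, x != y ->
    exists2 A, A \in F & (x \in A) != (y \in A).

Definition is_chain (n : nat) (F C : {set {set 'I_n}}) : Prop :=
  C \subset F /\
  (forall X Y, X \in C -> Y \in C -> X != Y -> (X \proper Y) || (Y \proper X)).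

Definition height_le (n : nat) (F : {set {set 'I_n}}) (h : nat) : Prop :=
  forall C, is_chain F C -> #|C| <= h.

Local Open Scope ring_scope.
Definition avg_size (n : nat) (F : {set {set 'I_n}}) : rat :=
  (\sum_(A in F) (#|A|%:R : rat)) / (#|F|%:R).

From mathcomp Require Import all_boot all_order all_algebra.
Set Implicit Arguments. Unset Strict Implicit. Unset Printing Implicit Defensive.
Import GRing.Theory Num.Theory.

(* Since [n] is in F and chains have at most three members, a member Y of F
   with a proper subset Z in F misses at most one point: if it missed w and z,
   a member W separating w from z would give a chain of four members
   Z \proper Y \proper Y :|: W \proper [n]. Hence two distinct members
   missing z have union [n] minus z, so a point z with [n] minus z outside F
   is missed by at most one member, and two distinct points are missed
   together by at most one member. It follows that sending (X, x), x outside
   X, to ([n] minus j, x) if X misses some j != x with [n] minus j in F, and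
   otherwise to ([n], y) for a well chosen y outside X, is an injection into
   the pairs (Y, y) with y in Y; so the complements of the members have total
   size at most the total size of the members. *)

Lemma union_closed_setT n (F : {set {set 'I_n}}) :
  union_closed F -> has_base_set F -> setT \in F.
Proof.
case=> [[A0 A0F _] F_union] <-.
have -> : \bigcup_(A in F) A = A0 :|: \bigcup_(A in F) A.
  by apply/esym/setUidPr/bigcup_sup.
apply: (big_ind (fun B => A0 :|: B \in F)) => [|B C BF CF|A AF].
- by rewrite setU0.
- by rewrite -[A0]setUid -setUACA; apply: F_union.
- exact: F_union.
Qed.

Lemma proper_chain_size_le n (F : {set {set 'I_n}}) h (s : seq {set 'I_n}) :
  height_le F h -> {subset s <= F} ->
  sorted [rel A B : {set 'I_n} | A \proper B] s -> size s <= h.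
Proof.
move=> F_h sF s_sorted.
have proper_tr : transitive [rel A B : {set 'I_n} | A \proper B].
  by move=> B A C; apply: proper_trans.
have /card_uniqP <- := sorted_uniq proper_tr (@properxx _) s_sorted.
rewrite -cardsE; apply: F_h; split; first by apply/subsetP => X /[!inE] /sF.
move=> X Y /[!inE] Xs Ys XY; have lt_proper := sorted_ltn_index proper_tr s_sorted.
case: (ltngtP (index X s) (index Y s)) => [lt_XY|lt_YX|/(index_inj X Xs Ys)/eqP].
- by have /= -> := lt_proper _ _ Xs Ys lt_XY.
- by have /= -> := lt_proper _ _ Ys Xs lt_YX; rewrite orbT.
- by rewrite (negbTE XY).
Qed.

Lemma card_pairs_dep (T U : finType) (A : {set T}) (S : T -> {set U}) :
  #|[set p : T * U | (p.1 \in A) && (p.2 \in S p.1)]| = \sum_(X in A) #|S X|.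
Proof.
under eq_bigr do rewrite -sum1_card.
by rewrite pair_big_dep sum1_card; apply: eq_card => p; rewrite inE.
Qed.

Section HeightThree.

Variables (n : nat) (F : {set {set 'I_n}}).
Hypothesis F_union : forall X Y, X \in F -> Y \in F -> X :|: Y \in F.
Hypothesis F_sep : separating F.
Hypothesis F_height : height_le F 3.
Hypothesis F_setT : setT \in F.

Lemma no_proper_chain4 A B C D :
  A \in F -> B \in F -> C \in F -> D \in F ->
  A \proper B -> B \proper C -> C \proper D -> False.
Proof.
move=> AF BF CF DF AB BC CD.
suff: size [:: A; B; C; D] <= 3 by [].
apply: (proper_chain_size_le F_height); last by rewrite /= AB BC CD.
by move=> X /[!inE] /or4P[] /eqP->.
Qed.

Lemma separating_proper_extension Y w z :
  Y \in F -> w != z -> w \notin Y -> z \notin Y ->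
  exists2 V, V \in F & Y \proper V /\ V \proper setT.
Proof.
move=> YF wz wY zY; have [W WF Wwz] := F_sep wz.
have [u [v [uW vW uY vY]]] :
    exists u v, [/\ u \in W, v \notin W, u \notin Y & v \notin Y].
  case/boolP: (w \in W) Wwz => wW Wwz; [exists w, z | exists z, w];
    by split=> //; case: (z \in W) Wwz.
exists (Y :|: W); first exact: F_union.
split; first by apply/properUl/subsetPn; exists u.
by rewrite properT; apply: contraTneq (in_setT v) => <-; rewrite inE negb_or vY.
Qed.

Lemma proper_supset_eq_setC1 Z Y z :
  Z \in F -> Y \in F -> Z \proper Y -> z \notin Y -> Y = [set~ z].
Proof.
move=> ZF YF ZY zY; apply/setP => w; rewrite in_setC1.
have [->|wz] := eqVneq w z; first exact: negbTE.
apply/negPn/negP => wY.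
have [V VF [YV VT]] := separating_proper_extension YF wz wY zY.
exact: no_proper_chain4 ZF YF VF F_setT ZY YV VT.
Qed.

Lemma setU_missing_eq_setC1 X X' z :
  X \in F -> X' \in F -> X != X' -> z \notin X -> z \notin X' ->
  X :|: X' = [set~ z].
Proof.
move=> XF X'F XX' zX zX'.
have [Z ZF ZXX'] : exists2 Z, Z \in F & Z \proper X :|: X'.
  have [XX'_X|XX'_X] := eqVneq (X :|: X') X; [exists X' | exists X] => //.
    by rewrite properEneq subsetUr XX'_X eq_sym XX'.
  by rewrite properEneq subsetUl eq_sym XX'_X.
by apply: proper_supset_eq_setC1 ZF (F_union XF X'F) ZXX' _; rewrite inE negb_or zX.
Qed.

Lemma missing_member_uniq X X' z :
  [set~ z] \notin F -> X \in F -> X' \in F -> z \notin X -> z \notin X' ->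
  X = X'.
Proof.
move=> zF XF X'F zX zX'; apply/eqP; apply: contraNT zF => XX'.
by rewrite -(setU_missing_eq_setC1 XF X'F XX' zX zX') F_union.
Qed.

Lemma missing2_member_uniq X X' j x :
  j != x -> X \in F -> X' \in F ->
  j \notin X -> x \notin X -> j \notin X' -> x \notin X' -> X = X'.
Proof.
move=> jx XF X'F jX xX jX' xX'; apply/eqP; apply: contraNT jx => XX'.
rewrite -(inj_eq (@set1_inj _)) -(inj_eq (@setC_inj _)).
rewrite -(setU_missing_eq_setC1 XF X'F XX' jX jX').
by rewrite (setU_missing_eq_setC1 XF X'F XX' xX xX').
Qed.

Definition nonincidences :=
  [set p : {set 'I_n} * 'I_n | (p.1 \in F) && (p.2 \in ~: p.1)].
Definition incidences :=
  [set p : {set 'I_n} * 'I_n | (p.1 \in F) && (p.2 \in p.1)].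

Definition to_incidence (p : {set 'I_n} * 'I_n) : {set 'I_n} * 'I_n :=
  let: (X, x) := p in
  if [pick j | (j \notin X) && (j != x) && ([set~ j] \in F)] is Some j
  then ([set~ j], x)
  else if [set~ x] \notin F then (setT, x)
  else if [pick y | (y \notin X) && (y != x)] is Some y then (setT, y)
  else (setT, x).

Variant to_incidence_spec (X : {set 'I_n}) (x : 'I_n) :
  {set 'I_n} * 'I_n -> Prop :=
  | ToCoatom j of j \notin X & j != x & [set~ j] \in F :
      to_incidence_spec X x ([set~ j], x)
  | ToTopSelf of X = [set~ x] : to_incidence_spec X x (setT, x)
  | ToTopFree of [set~ x] \notin F
    & (forall j, j \notin X -> j != x -> [set~ j] \notin F) :
      to_incidence_spec X x (setT, x)
  | ToTopOther y of y \notin X & y != x & [set~ x] \in F & [set~ y] \notin F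
    & (forall j, j \notin X -> j != x -> [set~ j] \notin F) :
      to_incidence_spec X x (setT, y).

Lemma to_incidenceP (X : {set 'I_n}) x :
  x \notin X -> to_incidence_spec X x (to_incidence (X, x)).
Proof.
move=> xX; rewrite /to_incidence.
case: pickP => [j /andP[/andP[jX jx] jF] | no_j]; first exact: ToCoatom.
have gap j : j \notin X -> j != x -> [set~ j] \notin F.
  by move=> jX jx; move: (no_j j); rewrite jX jx /= => ->.
case: ifP => [xF | /negbFE xF]; first exact: ToTopFree.
case: pickP => [y /andP[yX yx] | no_y].
  by apply: ToTopOther => //; apply: gap.
apply: ToTopSelf; apply/setP => y; rewrite in_setC1.
have [->|yx] := eqVneq y x; first exact: negbTE.
by move: (no_y y); rewrite yx andbT => /negbFE.
Qed.

Lemma to_incidence_inj : {in nonincidences &, injective to_incidence}.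
Proof.
move=> [X x] [X' x'] /[!inE] /andP[XF xX] /andP[X'F x'X].
rewrite /= in XF xX X'F x'X.
have setC1_neqT j : [set~ j] != setT :> {set 'I_n}.
  by apply: contraTneq (in_setT j) => <-; rewrite setC11.
case: (to_incidenceP xX) => [j jX jx jF|X_x|xF gap|y yX yx xF yF gap];
case: (to_incidenceP x'X)
  => [j' jX' jx' jF'|X'_x'|x'F gap'|y' yX' yx' x'F y'F gap'];
case; try by move=> /eqP; rewrite ?[setT == _]eq_sym (negbTE (setC1_neqT _)).
- move=> /setC_inj/set1_inj jj' xx'; subst j' x'.
  by rewrite (missing2_member_uniq jx XF X'F jX xX jX' x'X).
- by move=> xx'; subst x'; rewrite X_x X'_x'.
- by move=> xx'; move: x'F; rewrite -xx' -X_x XF.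
- by move=> xy'; move: y'F; rewrite -xy' -X_x XF.
- by move=> xx'; move: xF; rewrite xx' -X'_x' X'F.
- by move=> xx'; subst x'; rewrite (missing_member_uniq xF XF X'F xX x'X).
- move=> xy'; subst y'.
  have XX' := missing_member_uniq xF XF X'F xX yX'; subst X'.
  have x'x : x' != x by rewrite eq_sym.
  by case/negP: (gap x' x'X x'x).
- by move=> yx''; move: yF; rewrite yx'' -X'_x' X'F.
- move=> yx''; subst y.
  have XX' := missing_member_uniq x'F XF X'F yX x'X; subst X'.
  have xx' : x != x' by rewrite eq_sym.
  by case/negP: (gap' x xX xx').
- move=> yy'; subst y'.
  have XX' := missing_member_uniq yF XF X'F yX yX'; subst X'.
  have [-> //|xx'] := eqVneq x x'.
  by case/negP: (gap' x xX xx').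
Qed.

Lemma sum_card_setC_le : \sum_(X in F) #|~: X| <= \sum_(X in F) #|X|.
Proof.
have image_sub : to_incidence @: nonincidences \subset incidences.
  apply/subsetP => _ /imsetP[[X x] /[!inE] /andP[XF xX] ->].
  rewrite /= in XF xX.
  case: (to_incidenceP xX) => [j _ jx jF|_|_ _|y *];
    rewrite /= ?F_setT ?in_setT //.
  by rewrite jF in_setC1 eq_sym.
rewrite -(card_pairs_dep F (@setC _)) -(card_pairs_dep F id).
rewrite -(card_in_imset to_incidence_inj).
exact: subset_leq_card image_sub.
Qed.

End HeightThree.

Local Open Scope ring_scope.

Lemma avg_size_ge_half n (F : {set {set 'I_n}}) :
  F != set0 -> (\sum_(X in F) #|~: X| <= \sum_(X in F) #|X|)%N ->
  (n%:R / 2 : rat) <= avg_size F.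
Proof.
move=> /set0Pn[A0 A0F] le_sum.
have count_all : (\sum_(X in F) #|X| + \sum_(X in F) #|~: X| = #|F| * n)%N.
  rewrite -big_split -sum_nat_const; apply: eq_bigr => X _ /=.
  by rewrite cardsC card_ord.
have F_gt0 : (0 < #|F|)%N by apply/card_gt0P; exists A0.
rewrite /avg_size -natr_sum ler_pdivlMr ?ltr0n // mulrAC ler_pdivrMr ?ltr0n //.
by rewrite -!natrM ler_nat mulnC -count_all muln2 -addnn leq_add2l.
Qed.

Theorem theorem1p4 (n : nat) (F : {set {set 'I_n}}) :
  union_closed F -> has_base_set F -> separating F -> height_le F 3 ->
  (n%:R / 2 : rat) <= avg_size F.
Proof.
move=> F_closed F_base F_sep F_height; have [[A0 A0F _] F_union] := F_closed.
apply: avg_size_ge_half; first by apply/set0Pn; exists A0.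
exact: sum_card_setC_le F_union F_sep F_height (union_closed_setT F_closed F_base).
Qed.
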